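(* Let $g,h$ be relatively prime divisors of $N$. If $p\nmid g$, then $\beta_{g,h}=0$ unless $h=1$, or $f=M$ and $h=p$. If $p\ge5$ and $p\mid g$, then $\beta_{g,h}=0$.
   Context: $p$ is an odd prime, $M$ a positive integer with $p\nmid M\varphi(M)$, and $N=Mp$. $\Delta=(\mathbb{Z}/N\mathbb{Z})^\times/\langle-1\rangle$; $H$ is a space of level $N$ modular symbols: a $\mathbb{Z}_p[\Delta]$-module spanned by symbols $[u:v]$ ($u,v\in\mathbb{Z}/N\mathbb{Z}$ generating the unit ideal) satisfying $[u:v]=[-u:-v]=-[-v:u]$, $[u:v]=[u:u+v]+[u+v:v]$, $\langle a\rangle[u:v]=[au:av]$. $\theta:\Delta\to\mathbb{C}_p^\times$ is a character, $\omega$ the Teichmüller character of $(\mathbb{Z}/p\mathbb{Z})^\times$ viewed on $(\mathbb{Z}/N\mathbb{Z})^\times$, and $f$ the conductor of $\theta\omega^{-2}$; it is assumed that $M\mid f$, and that $f=Mp$ if $p=3$. $\mathcal{O}=\mathbb{Z}_p[\mu_{\varphi(N)}]$, $e_\theta=\frac1{\varphi(N)}\sum_a\theta^{-1}(a)\langle a\rangle$, $H^\theta=e_\theta(H\otimes\mathcal{O})$, and for characters $\chi,\psi$ of $(\mathbb{Z}/N\mathbb{Z})^\times$ with $\chi\psi=\theta$ and relatively prime divisors $g,h$ of $N$, $\alpha^{g,h}_{\chi,\psi}=\frac1{\varphi(N)^2}\sum_{a,b}\chi^{-1}(a)\psi^{-1}(b)[ga:hb]$. Set $\beta_{g,h}=\alpha^{g,h}_{\omega^2,\theta\omega^{-2}}$.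 *)

From HB Require Import structures.
From mathcomp Require Import all_boot all_order all_algebra all_fingroup.
Set Implicit Arguments. Unset Strict Implicit. Unset Printing Implicit Defensive.
Import GRing.Theory.
Local Open Scope ring_scope.

Definition unat (N : nat) (a : {unit 'Z_N}) : nat := nat_of_ord (FinRing.uval a).

Definition is_dchar (N : nat) (O : comUnitRingType) (chi : {unit 'Z_N} -> O) :=
  chi 1%g = 1 /\ forall a b : {unit 'Z_N}, chi (a * b)%g = chi a * chi b.

(* chi factors through Delta = (Z/NZ)^x / <-1>. *)
Definition even_char (N : nat) (O : comUnitRingType) (chi : {unit 'Z_N} -> O) :=
  forall a b : {unit 'Z_N}, FinRing.uval b = - FinRing.uval a -> chi b = chi a.

Definition triv_mod (N : nat) (O : comUnitRingType) (chi : {unit 'Z_N} -> O) (d : nat) :=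
  [forall a : {unit 'Z_N}, (unat a == 1 %[mod d])%N ==> (chi a == 1)].

(* Conductor: the smallest divisor d of N such that chi is trivial on
   units congruent to 1 mod d ("divisors N" is sorted increasingly). *)
Definition conductor (N : nat) (O : comUnitRingType) (chi : {unit 'Z_N} -> O) : nat :=
  head N [seq d <- divisors N | triv_mod chi d].

(* omega is (a) Teichmueller character of (Z/pZ)^x viewed on (Z/NZ)^x,
   relative to the reduction map red : O -> k (k of characteristic p):
   a character factoring through reduction mod p, with values (p-1)-th
   roots of unity and omega(a) = a modulo the maximal ideal. *)
Definition is_teichmuller (N p : nat) (O : comUnitRingType) (k : fieldType)
    (red : O -> k) (om : {unit 'Z_N} -> O) :=
  [/\ is_dchar om,
      forall a b : {unit 'Z_N}, (unat a = unat b %[mod p])%N -> om a = om b,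
      forall a, om a ^+ p.-1 = 1 &
      forall a, red (om a) = (unat a)%:R].

Definition unimod (N : nat) (u v : 'Z_N) : bool :=
  [exists x : 'Z_N, exists y : 'Z_N, x * u + y * v == 1].

(* V (playing the role of H (x) O) is an O-module spanned by symbols [u:v]
   (u, v unimodular), satisfying the modular symbol relations, with the
   diamond action <a>[u:v] = [au:av]. *)
Definition modsym_space (N : nat) (O : comUnitRingType) (V : lmodType O)
    (sym : 'Z_N -> 'Z_N -> V) (act : {unit 'Z_N} -> V -> V) :=
  [/\ forall u v, unimod u v ->
        [/\ sym u v = sym (- u) (- v), sym u v = - sym (- v) u
          & sym u v = sym u (u + v) + sym (u + v) v],
      forall x : V, exists c : 'Z_N -> 'Z_N -> O,
        x = \sum_(u : 'Z_N) \sum_(v : 'Z_N | unimod u v) c u v *: sym u v,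
      forall a (c : O) (x y : V), act a (c *: x + y) = c *: act a x + act a y,
      (forall x, act 1%g x = x /\ forall a b, act (a * b)%g x = act a (act b x)) &
      forall a u v, unimod u v ->
        act a (sym u v) = sym (FinRing.uval a * u) (FinRing.uval a * v)].

Definition alpha (N : nat) (O : comUnitRingType) (V : lmodType O)
    (sym : 'Z_N -> 'Z_N -> V) (chi psi : {unit 'Z_N} -> O) (g h : nat) : V :=
  (((totient N ^ 2)%N)%:R)^-1 *:
    \sum_(a : {unit 'Z_N}) \sum_(b : {unit 'Z_N})
      ((chi a)^-1 * (psi b)^-1) *: sym (g%:R * FinRing.uval a) (h%:R * FinRing.uval b).

Definition thom2 (N : nat) (O : comUnitRingType) (th om : {unit 'Z_N} -> O) :=
  fun b : {unit 'Z_N} => th b * (om b ^+ 2)^-1.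

Definition beta (N : nat) (O : comUnitRingType) (V : lmodType O)
    (sym : 'Z_N -> 'Z_N -> V) (th om : {unit 'Z_N} -> O) (g h : nat) : V :=
  alpha sym (fun a => om a ^+ 2) (thom2 th om) g h.

From HB Require Import structures.
From mathcomp Require Import all_boot all_order all_algebra all_fingroup.
From mathcomp Require Import cyclic.
Set Implicit Arguments. Unset Strict Implicit. Unset Printing Implicit Defensive.
Import GRing.Theory.
Local Open Scope ring_scope.

(* If psi = theta omega^-2
   is nontrivial on the units c with h c = h (i.e. c = 1 mod N/h),
   reindexing b |-> b c kills the inner sum; likewise for omega^2 and g.
   Triviality of psi mod N/h forces the conductor f <= N/h, and since
   M | f | M p, f is M or N; a Chinese remainder argument then leaves only
   h = 1, or f = M and h = p.  When p | g, the unit c = 1 mod M, c = 2 mod p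
   satisfies g c = g, while omega(c)^2 = 4 <> 1 mod p once p >= 5. *)

Lemma eqmod_dvd d m y z : (d %| m -> y = z %[mod m] -> y = z %[mod d])%N.
Proof. by move=> dm yz; rewrite -(modn_dvdm y dm) yz modn_dvdm. Qed.

Lemma coprime_chinese m1 m2 x y (m12 : coprime m1 m2) :
  coprime m1 x -> coprime m2 y -> coprime (m1 * m2) (chinese m1 m2 x y).
Proof.
move=> m1x m2y; rewrite coprimeMl -coprime_modr chinese_modl // coprime_modr m1x.
by rewrite -coprime_modr chinese_modr // coprime_modr.
Qed.

Lemma dvdn_between_mul_prime m f p :
  (0 < m)%N -> prime p -> (m %| f)%N -> (f %| m * p)%N -> f = m \/ f = (m * p)%N.
Proof.
move=> m_gt0 p_pr mf; rewrite -(divnK mf) mulnC dvdn_pmul2l //.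
by case/primeP: p_pr => _ /[apply] /orP [] /eqP ->; [left; rewrite muln1 | right].
Qed.

Lemma natr_eq_mod_pchar (R : nzRingType) p m n :
  p \in [pchar R] -> m%:R = n%:R :> R -> (m = n %[mod p])%N.
Proof.
move=> pR; wlog mn : m n / (m <= n)%N.
  by move=> IH; case/orP: (leq_total m n) => /IH // + /esym => /[apply].
by move/eqP; rewrite eq_sym -subr_eq0 -natrB // -(dvdn_pcharf pR) -eqn_mod_dvd // => /eqP.
Qed.

Lemma sum_expr_eq0 (R : idomainType) (z : R) n :
  z != 1 -> z ^+ n = 1 -> \sum_(i < n) z ^+ i = 0.
Proof.
move=> z_neq1 zn1; have /eqP := subrX1 z n.
by rewrite zn1 subrr eq_sym mulf_eq0 subr_eq0 (negPf z_neq1) => /eqP.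
Qed.

Section Characters.
Variables (gT : finGroupType) (R : unitRingType) (psi : gT -> R).
Hypotheses (psi1 : psi 1%g = 1) (psiM : {morph psi : a b / (a * b)%g >-> a * b}).

Lemma char_expg a n : psi (a ^+ n)%g = psi a ^+ n.
Proof. by elim: n => [|n IHn]; rewrite ?expg0 ?expgS ?psiM ?IHn ?exprS. Qed.

Lemma char_expg_card a : psi a ^+ #|gT| = 1.
Proof. by rewrite -char_expg -cardsT expg_cardG ?inE. Qed.

Lemma char_unit a : psi a \is a GRing.unit.
Proof.
have := char_expg_card a; have := cardG_gt0 [set: gT]; rewrite cardsT.
by case: #|gT| => // n _ e; apply/unitrP; exists (psi a ^+ n); rewrite -exprS -exprSr.
Qed.

End Characters.

(* [V] may have torsion, so [S = z *: S] with [z != 1] is not enough: the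
   powers of [z] average [S] to zero instead. *)
Lemma char_sum_eq0 (gT : finGroupType) (O : idomainType) (V : lmodType O)
    (psi : gT -> O) (F : gT -> V) c :
  psi 1%g = 1 -> {morph psi : a b / (a * b)%g >-> a * b} ->
  (#|gT|%:R : O) \is a GRing.unit -> psi c != 1 ->
  (forall b, F (b * c)%g = F b) -> \sum_b (psi b)^-1 *: F b = 0.
Proof.
move=> psi1 psiM card_unit psic_neq1 Fc; set S := \sum_b _; set z := (psi c)^-1.
have psi_unit := char_unit psi1 psiM.
have SzS : S = z *: S.
  rewrite {1}/S (reindex_inj (mulIg c)) scaler_sumr; apply: eq_bigr => b _.
  by rewrite Fc scalerA psiM invrM ?psi_unit.
have z_neq1 : z != 1 by rewrite invr_eq1 ?psi_unit.
have zn1 : z ^+ #|gT| = 1 by rewrite exprVn char_expg_card ?invr1.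
have zS i : z ^+ i *: S = S.
  by elim: i => [|i IHi]; rewrite ?scale1r // exprSr -scalerA -SzS.
have : #|gT|%:R *: S = 0.
  transitivity (\sum_(i < #|gT|) z ^+ i *: S).
    by under eq_bigr do rewrite zS; rewrite sumr_const card_ord scaler_nat.
  by rewrite -scaler_suml sum_expr_eq0 ?scale0r.
by move/(congr1 ( *:%R (#|gT|%:R)^-1)); rewrite scalerA mulVr ?scale1r ?scaler0.
Qed.

Lemma dchar_expr N (O : comUnitRingType) (chi : {unit 'Z_N} -> O) n :
  is_dchar chi -> is_dchar (fun a => chi a ^+ n).
Proof. by case=> chi1 chiM; split=> [|a b]; rewrite ?chi1 ?expr1n ?chiM ?exprMn. Qed.

Lemma dchar_thom2 N (O : comUnitRingType) (th om : {unit 'Z_N} -> O) :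
  is_dchar th -> is_dchar om -> is_dchar (thom2 th om).
Proof.
move=> [th1 thM] [om1 omM]; rewrite /thom2; split=> [|a b].
  by rewrite th1 om1 expr1n invr1 mulr1.
have om_unit := char_unit om1 omM.
by rewrite thM omM exprMn invrM ?unitrX ?om_unit // [om b ^- 2 / _]mulrC mulrACA.
Qed.

Section ZpUnits.
Variable N : nat.
Hypothesis N_gt1 : (1 < N)%N.
Implicit Types u v : {unit 'Z_N}.

Lemma uvalE u : FinRing.uval u = (unat u)%:R.
Proof. by rewrite /unat natr_Zp. Qed.

Lemma unat_mod u : (unat u %% N)%N = unat u.
Proof. by rewrite -val_Zp_nat // -uvalE. Qed.

Lemma unat_coprime u : coprime N (unat u).
Proof. by rewrite -unitZpE // -uvalE; case: u. Qed.

Lemma unat_inj : injective (@unat N).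
Proof. by move=> u v e; apply/val_inj; rewrite /= !uvalE e. Qed.

Lemma unatM u v : unat (u * v)%g = (unat u * unat v %% N)%N.
Proof.
have -> : unat (u * v)%g = nat_of_ord (FinRing.uval u * FinRing.uval v) by [].
by rewrite !uvalE -natrM val_Zp_nat.
Qed.

Lemma unat_1 : unat (1%g : {unit 'Z_N}) = 1%N.
Proof. by rewrite /unat -[RHS](modn_small N_gt1); exact: val_Zp_nat N_gt1 1. Qed.

Lemma unat_of_coprime n : coprime N n -> exists u : {unit 'Z_N}, unat u = (n %% N)%N.
Proof.
by rewrite -unitZpE // => n_unit; exists (FinRing.Unit n_unit); rewrite /unat val_Zp_nat.
Qed.

Lemma mulr_uval_fixed d u :
  (d %| N)%N -> (unat u = 1 %[mod N %/ d])%N -> d%:R * FinRing.uval u = d%:R.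
Proof.
move=> dN; have dx x : (x = 1 %[mod N %/ d] -> d * x = d %[mod N])%N.
  by move=> x1; rewrite -(divnK dN) mulnC -muln_modl x1 muln_modl mul1n.
by move=> /dx du; rewrite uvalE -natrM -Zp_nat_mod // du Zp_nat_mod.
Qed.

Lemma unat_eq1 u : (unat u = 1 %[mod N])%N -> u = 1%g.
Proof. by move=> u1; apply: unat_inj; rewrite unat_1 -(modn_small N_gt1) -u1 unat_mod. Qed.

End ZpUnits.

Lemma teichmuller_sqr_eq1 N p (O : comUnitRingType) (k : fieldType)
    (red : {rmorphism O -> k}) (om : {unit 'Z_N} -> O) u :
  p \in [pchar k] -> is_teichmuller p red om -> om u ^+ 2 = 1 -> (unat u ^ 2 = 1 %[mod p])%N.
Proof.
move=> pk [_ _ _ om_red] /(congr1 red); rewrite rmorphXn om_red rmorph1 -natrX.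
exact: (natr_eq_mod_pchar (n := 1) pk).
Qed.

Section Conductor.
Variables (N : nat) (O : comUnitRingType) (chi : {unit 'Z_N} -> O).
Hypothesis N_gt1 : (1 < N)%N.

Lemma conductor_le d : (d %| N)%N -> triv_mod chi d -> (conductor chi <= d)%N.
Proof.
move=> dN chi_d; rewrite /conductor.
have : d \in [seq d <- divisors N | triv_mod chi d].
  by rewrite mem_filter chi_d -dvdn_divisors // ltnW.
have : sorted leq [seq d <- divisors N | triv_mod chi d].
  by apply: sorted_filter; [exact: leq_trans | exact: sorted_divisors].
case: [seq _ <- _ | _] => [|e s] //= e_s; rewrite inE => /predU1P [-> //|ds].
by have /allP/(_ _ ds) := order_path_min leq_trans e_s.
Qed.

Lemma conductor_dvdn : (conductor chi %| N)%N.
Proof.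
rewrite /conductor; case E: [seq d <- divisors N | triv_mod chi d] => [|d s].
  exact: dvdnn.
have : d \in [seq d <- divisors N | triv_mod chi d] by rewrite E mem_head.
rewrite mem_filter => /andP [_].
by rewrite -dvdn_divisors // ltnW.
Qed.

Lemma triv_mod_conductor : chi 1%g = 1 -> triv_mod chi (conductor chi).
Proof.
move=> chi1; rewrite /conductor.
case E: [seq d <- divisors N | triv_mod chi d] => [|d s].
  apply/forall_inP => u /eqP /(unat_eq1 N_gt1) ->; exact/eqP.
have : d \in [seq d <- divisors N | triv_mod chi d] by rewrite E mem_head.
by rewrite mem_filter => /andP [].
Qed.

Lemma triv_mod_chinese d1 d2 e :
  N = (d1 * d2)%N -> coprime d1 d2 -> (e %| d1)%N -> is_dchar chi ->
  triv_mod chi d1 -> triv_mod chi (e * d2) -> triv_mod chi e.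
Proof.
move=> defN d12 ed1 [_ chiM] chi_d1 chi_ed2; apply/forall_inP => a.
move xE : (unat a) => x /eqP a1.
have : coprime (d1 * d2) x by rewrite -defN -xE; exact: unat_coprime.
rewrite coprimeMl => /andP [d1x d2x].
have [b bE] : exists b : {unit 'Z_N}, unat b = (chinese d1 d2 1 x %% N)%N.
  by apply: unat_of_coprime => //; rewrite defN coprime_chinese ?coprimen1.
have [c cE] : exists c : {unit 'Z_N}, unat c = (chinese d1 d2 x 1 %% N)%N.
  by apply: unat_of_coprime => //; rewrite defN coprime_chinese ?coprimen1.
have d1N : (d1 %| N)%N by rewrite defN dvdn_mulr.
have d2N : (d2 %| N)%N by rewrite defN dvdn_mull.
have -> : a = (b * c)%g.
  apply: unat_inj => //; rewrite unatM // bE cE modnMm -(unat_mod N_gt1 a) xE.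
  apply/eqP; rewrite defN (chinese_remainder d12); apply/andP; split.
    by rewrite -modnMm !chinese_modl // modnMm mul1n.
  by rewrite -modnMm !chinese_modr // modnMm muln1.
have chib : chi b == 1.
  by apply: (forall_inP chi_d1); rewrite bE (modn_dvdm _ d1N) chinese_modl.
have chic : chi c == 1.
  apply: (forall_inP chi_ed2); rewrite chinese_remainder ?(coprime_dvdl ed1) //.
  rewrite cE (modn_dvdm _ d2N) chinese_modr // eqxx andbT.
  by rewrite (modn_dvdm _ (dvdn_trans ed1 d1N)) (eqmod_dvd ed1 (chinese_modl d12 _ _)) a1.
by rewrite chiM (eqP chib) (eqP chic) mulr1.
Qed.

End Conductor.

Lemma conductor_triv_mod_cases p M N (O : comUnitRingType) (chi : {unit 'Z_N} -> O) h :
  prime p -> (0 < M)%N -> coprime M p -> N = (M * p)%N -> is_dchar chi ->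
  (M %| conductor chi)%N -> (h %| N)%N -> triv_mod chi (N %/ h) ->
  h = 1%N \/ conductor chi = M /\ h = p.
Proof.
move=> p_pr M_gt0 Mp defN chi_char Mf hN chi_h.
have N_gt1 : (1 < N)%N by rewrite defN (leq_trans (prime_gt1 p_pr)) ?leq_pmull.
have h_gt0 : (0 < h)%N := dvdn_gt0 (ltnW N_gt1) hN.
have [-> | h_neq1] := eqVneq h 1%N; [by left | right].
have h_gt1 : (1 < h)%N by rewrite ltn_neqAle h_gt0 andbT eq_sym.
have Nh_lt : (N %/ h < N)%N by rewrite ltn_Pdiv // ltnW.
have f_le := conductor_le N_gt1 (dvdn_div hN) chi_h.
have f_M : conductor chi = M.
  have : (conductor chi %| M * p)%N by rewrite -defN; exact: conductor_dvdn.
  case/(dvdn_between_mul_prime M_gt0 p_pr Mf) => // fN.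
  by move: f_le; rewrite fN -defN leqNgt Nh_lt.
split=> //; have [ph | ] := boolP (p %| h)%N.
  apply/eqP; rewrite eqn_leq (dvdn_leq h_gt0 ph) andbT.
  by move: f_le; rewrite f_M leq_divRL // defN leq_pmul2l.
rewrite -prime_coprime // coprime_sym => hp.
have hM : (h %| M)%N by rewrite -(Gauss_dvdl _ hp) -defN.
have : triv_mod chi (M %/ h).
  apply: (triv_mod_chinese N_gt1 defN Mp (dvdn_div hM) chi_char).
    by rewrite -f_M; apply: triv_mod_conductor; case: chi_char.
  by rewrite divn_mulAC // -defN.
have MN : (M %| N)%N by rewrite defN dvdn_mulr.
move/(conductor_le N_gt1 (dvdn_trans (dvdn_div hM) MN)).
by rewrite f_M leqNgt ltn_Pdiv.
Qed.

Section AlphaVanishing.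
Variables (N : nat) (O : idomainType) (V : lmodType O) (sym : 'Z_N -> 'Z_N -> V).
Variables (chi psi : {unit 'Z_N} -> O) (g h : nat).
Hypotheses (N_gt1 : (1 < N)%N) (totient_unit : ((totient N)%:R : O) \is a GRing.unit).

Let card_unit : (#|{: {unit 'Z_N}}|%:R : O) \is a GRing.unit.
Proof. by rewrite -cardsT -[[set: _]]/(units_Zp N) card_units_Zp // ltnW. Qed.

Lemma alpha_eq0_right :
  is_dchar psi -> (h %| N)%N -> ~~ triv_mod psi (N %/ h) -> alpha sym chi psi g h = 0.
Proof.
move=> [psi1 psiM] hN /forallPn [c]; rewrite negb_imply => /andP [/eqP c1 psic].
have hc := mulr_uval_fixed N_gt1 hN c1.
rewrite /alpha big1 ?scaler0 // => a _; under eq_bigr do rewrite -scalerA.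
rewrite -scaler_sumr (char_sum_eq0 psi1 psiM card_unit psic) ?scaler0 // => b.
by rewrite /= mulrCA hc (mulrC (FinRing.uval b)).
Qed.

Lemma alpha_eq0_left :
  is_dchar chi -> (g %| N)%N -> ~~ triv_mod chi (N %/ g) -> alpha sym chi psi g h = 0.
Proof.
move=> [chi1 chiM] gN /forallPn [c]; rewrite negb_imply => /andP [/eqP c1 chic].
have gc := mulr_uval_fixed N_gt1 gN c1.
rewrite /alpha exchange_big big1 ?scaler0 //= => b _.
under eq_bigr do rewrite mulrC -scalerA.
rewrite -scaler_sumr (char_sum_eq0 chi1 chiM card_unit chic) ?scaler0 // => a.
by rewrite /= mulrCA gc (mulrC (FinRing.uval a)).
Qed.

End AlphaVanishing.

Theorem lemma2p13
  (p M N : nat) (hp : prime p) (hp2 : (2 < p)%N) (hM : (0 < M)%N)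
  (hpM : ~~ (p %| M * totient M)%N) (hN : N = (M * p)%N)
  (O : idomainType) (k : fieldType) (red : {rmorphism O -> k})
  (hk : p \in [pchar k])
  (hphi : ((totient N)%:R : O) \is a GRing.unit)
  (V : lmodType O) (sym : 'Z_N -> 'Z_N -> V) (act : {unit 'Z_N} -> V -> V)
  (hV : modsym_space sym act)
  (om : {unit 'Z_N} -> O) (hom : is_teichmuller p red om)
  (th : {unit 'Z_N} -> O) (hth : is_dchar th) (hthev : even_char th)
  (hMf : (M %| conductor (thom2 th om))%N)
  (hp3 : p = 3%N -> conductor (thom2 th om) = N)
  (g h : nat) (hg : (g %| N)%N) (hh : (h %| N)%N) (hgh : coprime g h) :
  (~~ (p %| g)%N ->
     ~ (h = 1%N \/ (conductor (thom2 th om) = M /\ h = p)) ->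
     beta sym th om g h = 0)
  /\ ((5 <= p)%N -> (p %| g)%N -> beta sym th om g h = 0).
Proof.
have N_gt1 : (1 < N)%N by rewrite hN (leq_trans (ltnW hp2)) ?leq_pmull.
have Mp : coprime M p.
  by rewrite coprime_sym prime_coprime //; apply: contra hpM; exact: dvdn_mulr.
have [om_char _ _ _] := hom.
split=> [_ hnot | p_ge5 pg].
  apply: alpha_eq0_right => //; first exact: dchar_thom2.
  apply/negP => psi_h; apply: hnot.
  exact: (conductor_triv_mod_cases hp hM Mp hN (dchar_thom2 hth om_char)).
apply: alpha_eq0_left => //; first exact: dchar_expr.
have [u uE] : exists u : {unit 'Z_N}, unat u = (chinese M p 1 2 %% N)%N.
  apply: unat_of_coprime => //; rewrite hN coprime_chinese ?coprimen1 //.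
  by rewrite prime_coprime // gtnNdvd.
have pN : (p %| N)%N by rewrite hN dvdn_mull.
have NgM : (N %/ g %| M)%N.
  by rewrite -(dvdn_pmul2r (prime_gt0 hp)) -hN -{2}(divnK hg) dvdn_mul.
apply/forallPn; exists u; rewrite negb_imply; apply/andP; split.
  by rewrite uE (modn_dvdm _ (dvdn_div hg)) (eqmod_dvd NgM (chinese_modl Mp _ _)).
apply/eqP => /(teichmuller_sqr_eq1 hk hom).
rewrite -modnXm uE (modn_dvdm _ pN) chinese_modr // modnXm.
by rewrite !modn_small // (leq_trans _ p_ge5).
Qed.
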